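(* Let $K=\bigoplus_{p,q\ge0}K^{pq}$ be a double complex of Abelian topological groups with continuous differentials $d':K^{pq}\to K^{p+1,q}$, $d'':K^{pq}\to K^{p,q+1}$ satisfying $(d'+d'')^2=0$. Suppose that $d'':K^{pq}\to Z^{p,q+1}_{II}(K)$ is open for all $p,q\ge0$. Then the zero homomorphism $0^\bullet\to K^\bullet/K_I^\bullet$, and hence the inclusion $K_I^\bullet\to K^\bullet$, are quasi-open. In particular $H^n(K_I^\bullet)\to H^n(K^\bullet)$ is open for $n\ge0$.
   Context: $K^\bullet$ is the total complex: $K^n=\bigoplus_{p+q=n}K^{pq}$ (product topology; $K^n=0$ for $n<0$) with differential $d=d'+d''$. $Z^{pq}_{II}(K)=\ker(d''|K^{pq})$ with the subspace topology. $K_I$ is the subcomplex with $K_I^{pq}=0$ for $q>0$ and $K_I^{p0}=Z^{p0}_{II}(K)$, so $K_I^n=K_I^{n0}$ with differential $d'$. Cohomology groups carry the quotient topologies of cycles (subspace topology) by boundaries; $K^\bullet/K_I^\bullet$ has the quotient topology. For a homomorphism $\varphi:A^\bullet\to B^\bullet$ of complexes of Abelian topological groups, $\varphi$ is quasi-open if for every $n$ the map $\ker(d_A|A^n)\oplus B^{n-1}\to\ker(d_B|B^n)$, $(a,b)\mapsto\varphi a-d_Bb$, is open. *)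

From HB Require Import structures.
From mathcomp Require Import all_boot all_order all_algebra.
From mathcomp Require Import all_classical all_reals all_analysis.
Set Implicit Arguments. Unset Strict Implicit. Unset Printing Implicit Defensive.
Import Order.TTheory GRing.Theory Num.Theory.
Local Open Scope classical_set_scope.
Local Open Scope ring_scope.

(** All graded objects (K, K_I, K/K_I, 0) are encoded inside the single
  bigraded group  BG := forall p q, K p q  (pointwise operations).
  A complex A of Abelian topological groups is encoded by, for each degree n,
  - a subgroup  cS A n  of BG (representatives of degree-n elements),
  - a subgroup  cN A n  of cS A n (what is quotiented out),
  - the family  copen A n  of open subsets of the topological group cS A n,
  - a differential  cd A : BG -> BG.
  The degree-n group of A is  A^n = cS A n / cN A n  with the quotient
  topology; subsets of A^n are encoded by cN A n-saturated subsets of cS A n,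
  and such a set is open in A^n iff it is open in cS A n (quotient topology). *)

Section DoubleComplex.
Variable K : nat -> nat -> topologicalZmodType.
Variable d' : forall p q, {additive K p q -> K p.+1 q}.
Variable d'' : forall p q, {additive K p q -> K p q.+1}.

Definition BG := forall p q, K p q.
Definition bg0 : BG := fun p q => 0.
Definition bgadd (x y : BG) : BG := fun p q => x p q + y p q.
Definition bgopp (x : BG) : BG := fun p q => - x p q.
Definition bgsub (x y : BG) : BG := bgadd x (bgopp y).

Definition dh (x : BG) : BG := fun p =>
  match p as p0 return forall q, K p0 q with
  | 0 => fun q => 0
  | p'.+1 => fun q => d' p' q (x p' q)
  end.
Definition dv (x : BG) : BG := fun p q =>
  match q as q0 return K p q0 with
  | 0 => 0
  | q'.+1 => d'' p q' (x p q')
  end.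
Definition totd (x : BG) : BG := bgadd (dh x) (dv x).

Definition Tot (n : nat) : set BG :=
  [set x | forall p q, (p + q)%N <> n -> x p q = 0].

(** product topology on K^n *)
Definition Tot_open (n : nat) (U : set BG) : Prop :=
  U `<=` Tot n /\
  forall x, U x -> exists V : forall p q, set (K p q),
    (forall p q, (p + q)%N = n -> open (V p q) /\ V p q (x p q)) /\
    (forall y, Tot n y -> (forall p q, (p + q)%N = n -> V p q (y p q)) -> U y).

(** K_I^n = K_I^{n0} = Z_II^{n0}(K), placed in bidegree (n,0) *)
Definition KI (n : nat) : set BG :=
  [set x | (forall p q, (p, q) <> (n, 0%N) -> x p q = 0) /\ d'' n 0 (x n 0%N) = 0].

(** subspace topology of Z_II^{n0}(K) in K^{n0} *)
Definition KI_open (n : nat) (U : set BG) : Prop :=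
  exists O : set (K n 0%N), open O /\ U = [set x | KI n x /\ O (x n 0%N)].

Record cplx := Cplx {
  cS : nat -> set BG;
  cN : nat -> set BG;
  copen : nat -> set BG -> Prop;
  cd : BG -> BG }.

Definition cplxK : cplx := Cplx Tot (fun _ => [set bg0]) Tot_open totd.
Definition cplxKI : cplx := Cplx KI (fun _ => [set bg0]) KI_open totd.
Definition cplxKmodKI : cplx := Cplx Tot KI Tot_open totd.
Definition cplx0 : cplx :=
  Cplx (fun _ => [set bg0]) (fun _ => [set bg0]) (fun _ U => U `<=` [set bg0]) totd.

Definition saturated (N U : set BG) : Prop :=
  forall x m, U x -> N m -> U (bgadd x m).

Definition qopen (A : cplx) (n : nat) (U : set BG) : Prop :=
  U `<=` cS A n /\ saturated (cN A n) U /\ copen A n U.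

(** A^{n-1}, with A^{-1} = 0 *)
Definition Sprev (A : cplx) (n : nat) : set BG :=
  if n is n'.+1 then cS A n' else [set bg0].
Definition Nprev (A : cplx) (n : nat) : set BG :=
  if n is n'.+1 then cN A n' else [set bg0].
Definition qopen_prev (A : cplx) (n : nat) (U : set BG) : Prop :=
  if n is n'.+1 then qopen A n' U else U `<=` [set bg0].

Definition cyc (A : cplx) (n : nat) : set BG :=
  [set x | cS A n x /\ cN A n.+1 (cd A x)].
Definition cyc_open (A : cplx) (n : nat) (W : set BG) : Prop :=
  exists O, qopen A n O /\ W = O `&` cyc A n.

Definition bnd (A : cplx) (n : nat) : set BG :=
  if n is n'.+1 then
    [set bgadd (cd A b) m | b in cS A n' & m in cN A n]
  else cN A 0%N.

(** open subsets of H^n(A) = Z^n(A)/B^n(A) (quotient topology) *)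
Definition hom_open (A : cplx) (n : nat) (V : set BG) : Prop :=
  V `<=` cyc A n /\ saturated (bnd A n) V /\ cyc_open A n V.

(** H^n(phi) : H^n(A) -> H^n(B) is open (images of open sets, pulled back
    to Z^n(B), are open) *)
Definition hom_map_open (phi : BG -> BG) (A B : cplx) (n : nat) : Prop :=
  forall V, hom_open A n V ->
    cyc_open B n [set bgadd (phi x) b | x in V & b in bnd B n].

(** open subsets of Z^n(A) (+) B^{n-1} (product topology) *)
Definition src_open (A B : cplx) (n : nat) (W : set (BG * BG)) : Prop :=
  W `<=` cyc A n `*` Sprev B n /\
  (forall a b m m', W (a, b) -> cN A n m -> Nprev B n m' ->
      W (bgadd a m, bgadd b m')) /\
  (forall a b, W (a, b) -> exists U V,
      [/\ cyc_open A n U, U a, qopen_prev B n V, V b & U `*` V `<=` W]).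

(** phi : A -> B is quasi-open in degree n: the map
    Z^n(A) (+) B^{n-1} -> Z^n(B), (a,b) |-> phi a - d_B b, is open *)
Definition quasi_open_deg (phi : BG -> BG) (A B : cplx) (n : nat) : Prop :=
  forall W, src_open A B n W ->
    cyc_open B n [set bgadd (bgsub (phi w.1) (cd B w.2)) m
                 | w in W & m in cN B n].

Definition quasi_open (phi : BG -> BG) (A B : cplx) : Prop :=
  forall n, quasi_open_deg phi A B n.

End DoubleComplex.

From Pilot Require Import Defs.
From HB Require Import structures.
From mathcomp Require Import all_boot all_order all_algebra.
From mathcomp Require Import all_classical all_reals all_analysis.
From mathcomp Require Import zify.
Import Order.TTheory GRing.Theory Num.Theory.
Local Open Scope classical_set_scope.
Local Open Scope ring_scope.

(* A cycle z of K/K_I of degree n that is close to 0 is pushed down the staircase.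
   Its top component z^{0,n} is a d''-cocycle, so by openness of d'' it equals
   d'' e for a small e in K^{0,n-1}; replacing z by z - d e kills that component
   and perturbs z^{1,n-1} only by the small element d' e.  After n steps what
   remains lies in K^{n,0} and is d''-closed, i.e. belongs to K_I^n.  Hence every
   cycle close to a given one differs from it by the boundary of a small cochain
   plus an element of K_I^n, which is the local form of all three statements. *)

Lemma dchoice2 (I J : Type) (T : I -> J -> Type) (P : forall i j, T i j -> Prop) :
  (forall i j, exists x, P i j x) -> exists f : forall i j, T i j, forall i j, P i j (f i j).
Proof.
by move=> ex; exists (fun i j => sval (cid (ex i j))) => i j; case: (cid (ex i j)).
Qed.

Lemma nbhs_preimage (T U : topologicalType) (f : T -> U) (x : T) (V : set U) :
  {for x, continuous f} -> nbhs (f x) V -> nbhs x (f @^-1` V).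
Proof. by move=> cf; apply: cf. Qed.

Lemma nbhs_open_sub (T : topologicalType) (x : T) (A : set T) :
  nbhs x A -> exists B, [/\ open B, B x & B `<=` A].
Proof. by rewrite nbhsE => -[B [oB Bx] BA]; exists B. Qed.

Section TopologicalZmoduleNbhs.
Context {M : topologicalZmodType}.

Lemma addrl_continuous (b : M) : continuous (+%R b).
Proof.
move=> x; apply: (@continuous_comp _ _ _ (fun y => (b, y)) (fun z : M * M => z.1 + z.2)).
  by apply: cvg_pair; [exact: cvg_cst | exact: cvg_id].
exact: add_continuous.
Qed.

Lemma open_translate (b : M) (A : set M) : open A -> open [set y | A (y + b)].
Proof.
move=> oA; rewrite (_ : [set y | _] = +%R b @^-1` A); last first.
  by apply/seteqP; split => y /=; rewrite addrC.
exact: (continuousP _).1 (addrl_continuous b) _ oA.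
Qed.

Lemma nbhs0_translate (b : M) (A : set M) : open A -> A b -> nbhs 0 [set y | A (b + y)].
Proof.
move=> oA Ab; apply: (addrl_continuous b 0); rewrite /= addr0.
exact: open_nbhs_nbhs.
Qed.

Lemma nbhs0_subr {O : set M} : nbhs 0 O ->
  exists A B, [/\ nbhs 0 A, nbhs 0 B & forall x y, A x -> B y -> O (x - y)].
Proof.
move=> O0; have : nbhs (0 : M, 0 : M) ((fun z : M * M => z.1 - z.2) @^-1` O).
  by apply: sub_continuous; rewrite /= subr0.
by case=> -[A B] /= [A0 B0] AB; exists A, B; split => // x y Ax By; exact: (AB (x, y)).
Qed.

End TopologicalZmoduleNbhs.

(* [x] ranges over whole families, so no transport along [(i', j') = (i, j)] is needed. *)
Lemma nbhs_family_single {I J : Type} {T : I -> J -> topologicalZmodType} {i j}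
    {O : set (T i j)} {x0 : T i j} : open O -> O x0 ->
  exists2 N : forall i j, set (T i j), (forall i j, nbhs 0 (N i j)) &
    forall x : (forall i j, T i j), N i j (x i j) -> O (x0 + x i j).
Proof.
move=> oO Ox0.
have /dchoice2 [N N0] i' j' : exists N : set (T i' j'), nbhs 0 N /\
    ((i', j') = (i, j) -> forall x : (forall i j, T i j), N (x i' j') -> O (x0 + x i j)).
  have [[-> ->]|ij] := pselect ((i', j') = (i, j)); last by exists setT; split=> //; exact: filterT.
  by exists [set v | O (x0 + v)]; split=> //; exact: nbhs0_translate.
by exists N => [i' j'|x]; [case: (N0 i' j') | exact: (N0 i j).2].
Qed.

Section DoubleComplex.
Variable K : nat -> nat -> topologicalZmodType.
Variable d' : forall p q, {additive K p q -> K p.+1 q}.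
Variable d'' : forall p q, {additive K p q -> K p q.+1}.
Local Notation BG := (BG K).
Local Notation bg0 := (bg0 K).
Local Notation bgadd := (@bgadd K).
Local Notation bgopp := (@bgopp K).
Local Notation bgsub := (@bgsub K).
Local Notation dh := (@dh K d').
Local Notation dv := (@dv K d'').
Local Notation totd := (@totd K d' d'').
Local Notation Tot := (@Tot K).
Local Notation KI := (@KI K d'').

Lemma bgext (x y : BG) : (forall p q, x p q = y p q) -> x = y.
Proof.
move=> xy; apply: functional_extensionality_dep => p.
by apply: functional_extensionality_dep => q; exact: xy.
Qed.

Lemma bgaddE x y p q : bgadd x y p q = x p q + y p q. Proof. by []. Qed.
Lemma bgoppE x p q : bgopp x p q = - x p q. Proof. by []. Qed.
Lemma bgsubE x y p q : bgsub x y p q = x p q - y p q. Proof. by []. Qed.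
Lemma bg0E p q : bg0 p q = 0. Proof. by []. Qed.

Lemma bgaddx0 x : bgadd x bg0 = x.
Proof. by apply: bgext => p q; rewrite bgaddE addr0. Qed.

Lemma bgadd_subKr s x m m' : bgadd s m' = bgadd x m -> bgadd s (bgsub m' m) = x.
Proof.
move=> E; apply: bgext => p q; have := f_equal (fun f => f p q) E.
by rewrite !bgaddE bgsubE => e; rewrite addrA e addrK.
Qed.

Lemma totdD x y : totd (bgadd x y) = bgadd (totd x) (totd y).
Proof.
apply: bgext => -[|p] [|q]; rewrite /Defs.totd /Defs.bgadd /= ?raddfD ?addr0 //.
- by rewrite !add0r.
- by rewrite addrACA.
Qed.

Lemma totdN x : totd (bgopp x) = bgopp (totd x).
Proof.
apply: bgext => -[|p] [|q];
  by rewrite /Defs.totd /Defs.bgadd /Defs.bgopp /= ?raddfN ?opprD ?oppr0 ?addr0 ?add0r.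
Qed.

Lemma totdB x y : totd (bgsub x y) = bgsub (totd x) (totd y).
Proof. by rewrite totdD totdN. Qed.

Lemma totd0 : totd bg0 = bg0.
Proof.
by apply: bgext => -[|p] [|q]; rewrite /Defs.totd /Defs.bgadd /Defs.bg0 /= ?raddf0 addr0.
Qed.

Lemma dh_supp x p q : (forall p', p = p'.+1 -> x p' q = 0) -> dh x p q = 0.
Proof. by case: p => [|p] //= x0; rewrite x0 // raddf0. Qed.

Lemma dv_supp x p q : (forall q', q = q'.+1 -> x p q' = 0) -> dv x p q = 0.
Proof. by case: q => [|q] //= x0; rewrite x0 // raddf0. Qed.

Lemma totd_supp x p q : (forall p', p = p'.+1 -> x p' q = 0) ->
  (forall q', q = q'.+1 -> x p q' = 0) -> totd x p q = 0.
Proof. by move=> xh xv; rewrite /Defs.totd bgaddE dh_supp // dv_supp // addr0. Qed.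

Lemma totd_single {k j e} : (forall p q, (p, q) <> (k, j) -> e p q = 0) ->
  [/\ totd e k.+1 j = d' k j (e k j), totd e k j.+1 = d'' k j (e k j) &
      forall p q, (p, q) <> (k.+1, j) -> (p, q) <> (k, j.+1) -> totd e p q = 0].
Proof.
move=> e0; split.
- rewrite /Defs.totd bgaddE (@dv_supp _ k.+1) ?addr0 // => q' _.
  by apply: e0 => -[]; lia.
- rewrite /Defs.totd bgaddE (@dh_supp _ k j.+1) ?add0r // => p' _.
  by apply: e0 => -[]; lia.
- move=> p q ph pv; apply: totd_supp => [p' pE | q' qE]; apply: e0 => -[E1 E2].
    by apply: ph; rewrite pE E1 E2.
  by apply: pv; rewrite qE E1 E2.
Qed.

(* The support of K^{n-1}, with K^{-1} = 0. *)
Definition Tot_prev n (c : BG) := forall p q, (p + q).+1 <> n -> c p q = 0.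

Lemma Tot_totd {n c} : Tot_prev n c -> Tot n (totd c).
Proof.
move=> c0 p q pqn; apply: totd_supp => [p' pE | q' qE]; apply: c0.
  by move: pqn; rewrite pE addSn.
by move: pqn; rewrite qE addnS.
Qed.

Lemma Tot_add {n x y} : Tot n x -> Tot n y -> Tot n (bgadd x y).
Proof. by move=> x0 y0 p q pqn; rewrite bgaddE x0 // y0 // addr0. Qed.

Lemma Tot_opp {n x} : Tot n x -> Tot n (bgopp x).
Proof. by move=> x0 p q pqn; rewrite bgoppE x0 // oppr0. Qed.

Lemma KI_Tot {n m} : KI n m -> Tot n m.
Proof. by move=> [m0 _] p q pqn; apply: m0 => -[pE qE]; apply: pqn; rewrite pE qE addn0. Qed.

Lemma KI0 n : KI n bg0.
Proof. by split => //; rewrite raddf0. Qed.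

Lemma KI_add {n x y} : KI n x -> KI n y -> KI n (bgadd x y).
Proof.
move=> [x0 dx] [y0 dy]; split => [p q pq|]; rewrite bgaddE ?raddfD.
  by rewrite x0 // y0 // addr0.
by rewrite dx dy addr0.
Qed.

Lemma KI_opp {n x} : KI n x -> KI n (bgopp x).
Proof.
move=> [x0 dx]; split => [p q pq|]; rewrite bgoppE ?raddfN.
  by rewrite x0 // oppr0.
by rewrite dx oppr0.
Qed.

Hypothesis dd0 : forall x : BG, totd (totd x) = bg0.

(* For z in K^n this says that z is a cycle modulo K_I. *)
Definition d_concentrated n (z : BG) :=
  forall p q, (p, q) <> (n.+1, 0%N) -> totd z p q = 0.

Lemma d_concentrated_add {n x y} :
  d_concentrated n x -> d_concentrated n y -> d_concentrated n (bgadd x y).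
Proof. by move=> dx dy p q pq; rewrite totdD bgaddE dx // dy // addr0. Qed.

Lemma d_concentrated_opp {n x} : d_concentrated n x -> d_concentrated n (bgopp x).
Proof. by move=> dx p q pq; rewrite totdN bgoppE dx // oppr0. Qed.

Lemma d_concentrated_totd n c : d_concentrated n (totd c).
Proof. by move=> p q _; rewrite dd0. Qed.

Lemma d_concentrated_cycle {n z} : totd z = bg0 -> d_concentrated n z.
Proof. by move=> dz p q _; rewrite dz. Qed.

Lemma d''_leftmost_column {n k q z} : d_concentrated n z ->
  (forall p q, (p < k)%N -> z p q = 0) -> d'' k q (z k q) = 0.
Proof.
move=> dz zk; have kq : (k, q.+1) <> (n.+1, 0%N) by case.
have := dz _ _ kq; rewrite /Defs.totd bgaddE /= dh_supp ?add0r //.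
by move=> p' kE; apply: zk; rewrite kE.
Qed.

Lemma KI_d_concentrated {n m} : KI n m -> d_concentrated n m.
Proof.
move=> [m0 dm] p q pq; rewrite /Defs.totd bgaddE dh_supp ?add0r; last first.
  by move=> p' pE; apply: m0 => -[p'E qE]; apply: pq; rewrite pE p'E qE.
case: q pq => [|q] pq //=.
have [[-> ->]|pq'] := pselect ((p, q) = (n, 0%N)); first by rewrite dm.
by rewrite m0 // raddf0.
Qed.

Lemma KI_totd {n m} : KI n m -> KI n.+1 (totd m).
Proof.
move=> Im; split; first exact: KI_d_concentrated.
have := f_equal (fun x => x n.+1 1%N) (dd0 m).
by rewrite {1}/Defs.totd bgaddE /= (@KI_d_concentrated n) // raddf0 add0r.
Qed.

Hypothesis cont_d' : forall p q, continuous (d' p q).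
Hypothesis open_d'' : forall p q (U : set (K p q)), open U ->
  exists O : set (K p q.+1), open O /\ d'' p q @` U = O `&` [set z | d'' p q.+1 z = 0].

Lemma nbhs_lift_d' {Op Nc : forall p q, set (K p q)} :
  (forall p q, nbhs 0 (Op p q)) -> (forall p q, nbhs 0 (Nc p q)) ->
  exists A U : forall p q, set (K p q), [/\ forall p q, nbhs 0 (A p q),
    forall p q, open (U p q) /\ U p q 0 &
    forall p q y, U p q y -> Nc p q (- y) /\ forall x, A p.+1 q x -> Op p.+1 q (x - d' p q y)].
Proof.
move=> Op0 Nc0.
have /dchoice2 [AB AB0] p q : exists AB : set (K p q) * set (K p q),
    [/\ nbhs 0 AB.1, nbhs 0 AB.2 & forall x y, AB.1 x -> AB.2 y -> Op p q (x - y)].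
  by have [A [B ?]] := nbhs0_subr (Op0 p q); exists (A, B).
pose V p q := [set y : K p q | Nc p q (- y) /\ (AB p.+1 q).2 (d' p q y)].
have V0 p q : nbhs 0 (V p q).
  apply: filterI.
    by apply: (@nbhs_preimage _ _ -%R); [exact: opp_continuous | rewrite oppr0; exact: Nc0].
  apply: (@nbhs_preimage _ _ (d' p q)); first exact: cont_d'.
  by rewrite raddf0; case: (AB0 p.+1 q) => _ ? _.
have /dchoice2 [U U0] p q : exists U : set (K p q), [/\ open U, U 0 & U `<=` V p q].
  exact: nbhs_open_sub (V0 p q).
exists (fun p q => (AB p q).1), U; split=> [p q|p q|p q y Uy].
- by case: (AB0 p q).
- by case: (U0 p q).
have [_ _ /(_ y Uy) [Ncy By]] := U0 p q; split=> // x Ax.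
by case: (AB0 p.+1 q) => _ _; apply.
Qed.

Lemma staircase_step {n k j} {Op Nc : forall p q, set (K p q)} : (k + j.+1)%N = n ->
  (forall p q, nbhs 0 (Op p q)) -> (forall p q, nbhs 0 (Nc p q)) ->
  exists2 O : forall p q, set (K p q), (forall p q, nbhs 0 (O p q)) &
  forall z, Tot n z -> (forall p q, (p < k)%N -> z p q = 0) -> d_concentrated n z ->
    (forall p q, O p q (z p q)) ->
  exists e, [/\ forall p q, (p, q) <> (k, j) -> e p q = 0, Nc k j (- e k j),
    forall p q, (p <= k)%N -> bgsub z (totd e) p q = 0 &
    forall p q, Op p q (bgsub z (totd e) p q)].
Proof.
move=> nkj Op0 Nc0.
have [A [U [A0 U0 UOp]]] := nbhs_lift_d' Op0 Nc0.
have /dchoice2 [Oim Oim0] p q : exists O : set (K p q.+1),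
    open O /\ d'' p q @` U p q = O `&` [set z | d'' p q.+1 z = 0].
  by apply: open_d''; case: (U0 p q).
(* The last factor cuts d''(U) out of the d''-cocycles, so that a small cocycle
   z^{k,j+1} is d'' e for some e in U. *)
exists (fun p q => Op p q `&` A p q `&`
  match q as q0 return set (K p q0) with 0 => setT | q'.+1 => Oim p q' end).
  move=> p q; apply: filterI; first exact: filterI.
  case: q => [|q] /=; first exact: filterT.
  apply: open_nbhs_nbhs; split; first by case: (Oim0 p q).
  have : (d'' p q @` U p q) 0 by exists 0; [case: (U0 p q) | rewrite raddf0].
  by rewrite (Oim0 p q).2 => -[].
move=> z Tz zk dz zO.
have /dchoice2 [E EP] p q : exists x : K p q,
    (p, q) = (k, j) -> U p q x /\ d'' p q x = z p q.+1.
  have [[-> ->]|kj] := pselect ((p, q) = (k, j)); last by exists 0 => /kj.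
  have : (d'' k j @` U k j) (z k j.+1).
    by rewrite (Oim0 k j).2; split; [case: (zO k j.+1) | exact: d''_leftmost_column dz zk].
  by case=> y Uy dy; exists y.
pose e : BG := fun p q => if (p == k) && (q == j) then E p q else 0.
have e0 p q : (p, q) <> (k, j) -> e p q = 0.
  by rewrite /e; case: eqP => [->|//]; case: eqP => [->|//].
have [Uekj dekj] : U k j (e k j) /\ d'' k j (e k j) = z k j.+1 by rewrite /e !eqxx; exact: EP.
have [de_h de_v de0] := totd_single e0.
have z'0 p q : (p <= k)%N -> bgsub z (totd e) p q = 0.
  move=> pk; rewrite bgsubE.
  have [[-> ->]|pq] := pselect ((p, q) = (k, j.+1)); first by rewrite de_v dekj subrr.
  have pk1 : (p, q) <> (k.+1, j) by case=> pE _; rewrite pE ltnn in pk.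
  rewrite de0 // subr0; have [/zk -> //|kp] := ltnP p k.
  by apply: Tz => pqn; apply: pq; congr pair; lia.
have [Nce AOp] := UOp k j _ Uekj.
exists e; split => // p q.
have [[-> ->]|pk1] := pselect ((p, q) = (k.+1, j)).
  by rewrite bgsubE de_h; apply: AOp; case: (zO k.+1 j) => -[].
have [[-> ->]|pq] := pselect ((p, q) = (k, j.+1)).
  by rewrite z'0 //; exact: nbhs_singleton (Op0 _ _).
by rewrite bgsubE de0 // subr0; case: (zO p q) => -[].
Qed.

Lemma staircase {n j} {Nc Nm : forall p q, set (K p q)} : (j <= n)%N ->
  (forall p q, nbhs 0 (Nc p q)) -> (forall p q, nbhs 0 (Nm p q)) ->
  exists2 O : forall p q, set (K p q), (forall p q, nbhs 0 (O p q)) &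
  forall z, Tot n z -> (forall p q, (p < n - j)%N -> z p q = 0) -> d_concentrated n z ->
    (forall p q, O p q (z p q)) ->
  exists c m, [/\ Tot_prev n c, forall p q, (p < n - j)%N -> c p q = 0,
    forall p q, Nc p q (c p q), KI n m /\ Nm n 0%N (m n 0%N) & z = bgsub m (totd c)].
Proof.
move=> + Nc0 Nm0; elim: j => [_|j IH jn].
  exists Nm => // z Tz z0 dz zNm; rewrite subn0 in z0.
  exists bg0, z; split => //.
  - by move=> p q; exact: nbhs_singleton (Nc0 p q).
  - split=> //; split.
      move=> p q pq; have [/z0 -> //|np] := ltnP p n.
      by apply: Tz => pqn; apply: pq; congr pair; lia.
    exact: d''_leftmost_column dz z0.
  - by rewrite totd0; apply: bgext => p q; rewrite bgsubE bg0E subr0.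
have [Op Op0 IHz] := IH (ltnW jn).
have nkj : (n - j.+1 + j.+1)%N = n by rewrite subnK.
have [Q Q0 stepz] := staircase_step nkj Op0 Nc0.
exists Q => // z Tz zk dz zQ.
have [e [e0 Nce z'0 z'Op]] := stepz z Tz zk dz zQ.
have Te : Tot_prev n e by move=> p q pqn; apply: e0 => -[pE qE]; apply: pqn; lia.
have Tz' : Tot n (bgsub z (totd e)) by exact: Tot_add Tz (Tot_opp (Tot_totd Te)).
have z'k p q : (p < n - j)%N -> bgsub z (totd e) p q = 0 by move=> pk; apply: z'0; lia.
have dz' : d_concentrated n (bgsub z (totd e)).
  exact: d_concentrated_add dz (d_concentrated_opp (d_concentrated_totd _ _)).
have [c [m [Tc ck Ncc Im zE]]] := IHz _ Tz' z'k dz' z'Op.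
exists (bgsub c e), m; split => //.
- by move=> p q pqn; rewrite bgsubE Tc // Te // subr0.
- move=> p q pk; rewrite bgsubE ck ?e0 ?subr0 //; last lia.
  by case=> pE _; lia.
- move=> p q; have [[-> ->]|pq] := pselect ((p, q) = ((n - j.+1)%N, j)).
    by rewrite bgsubE ck ?sub0r //; lia.
  by rewrite bgsubE e0 // subr0.
- apply: bgext => p q; have := f_equal (fun x => x p q) zE.
  rewrite totdB !bgsubE; move: (m p q) (totd c p q) (totd e p q) => x y u /eqP.
  by rewrite subr_eq => /eqP ->; rewrite opprB addrA [LHS]addrAC.
Qed.

Lemma decomp_near {n s} {Nc Nm : forall p q, set (K p q)} :
  Tot n s -> d_concentrated n s ->
  (forall p q, nbhs 0 (Nc p q)) -> (forall p q, nbhs 0 (Nm p q)) ->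
  exists V : forall p q, set (K p q), [/\ forall p q, open (V p q), forall p q, V p q (s p q) &
    forall y, Tot n y -> (forall p q, (p + q)%N = n -> V p q (y p q)) -> d_concentrated n y ->
    exists c m, [/\ Tot_prev n c, forall p q, Nc p q (c p q), KI n m /\ Nm n 0%N (m n 0%N) &
      y = bgadd s (bgsub m (totd c))]].
Proof.
move=> Ts ds Nc0 Nm0.
have [Q Q0 decomp] := staircase (leqnn n) Nc0 Nm0.
have /dchoice2 [B B0] p q : exists B : set (K p q), [/\ open B, B 0 & B `<=` Q p q].
  exact: nbhs_open_sub (Q0 p q).
exists (fun p q => [set y | B p q (y - s p q)]); split.
- by move=> p q; have [oB _ _] := B0 p q; exact: open_translate.
- by move=> p q /=; rewrite subrr; case: (B0 p q).
move=> y Ty yB dy.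
have Tys : Tot n (bgsub y s) := Tot_add Ty (Tot_opp Ts).
have ys0 p q : (p < n - n)%N -> bgsub y s p q = 0 by rewrite subnn.
have dys : d_concentrated n (bgsub y s) := d_concentrated_add dy (d_concentrated_opp ds).
have ysQ p q : Q p q (bgsub y s p q).
  have [pqn|/eqP pqn] := eqVneq (p + q)%N n.
    by case: (B0 p q) => _ _; apply; exact: yB.
  by rewrite bgsubE Ty // Ts // subrr; exact: nbhs_singleton (Q0 p q).
have [c [m [Tc _ Ncc Im ysE]]] := decomp _ Tys ys0 dys ysQ.
exists c, m; split => //.
by rewrite -ysE; apply: bgext => p q; rewrite bgaddE bgsubE addrC subrK.
Qed.

Lemma cyc_open_of_local (A : cplx K) n (S : set BG) :
  cS A n = Tot n -> copen A n = Tot_open n -> cN A n `<=` Tot n -> cN A n bg0 ->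
  (forall a b, cN A n a -> cN A n b -> cN A n (bgsub a b)) ->
  (forall x m, cN A n m -> cyc A n x -> cyc A n (bgadd x m)) ->
  (forall x m, cN A n m -> S (bgadd x m) -> S x) -> S `<=` cyc A n ->
  (forall s, S s -> exists V : forall p q, set (K p q),
     [/\ forall p q, open (V p q), forall p q, V p q (s p q) &
     forall y, Tot n y -> (forall p q, (p + q)%N = n -> V p q (y p q)) -> cyc A n y -> S y]) ->
  cyc_open A n S.
Proof.
move=> SE oE NT N0 NB Csat Ssat SC loc.
(* The [cN A n]-saturation of the union of all product neighbourhoods as in [loc]. *)
pose O := [set x | Tot n x /\ exists2 m, cN A n m & exists V : forall p q, set (K p q),
  [/\ forall p q, open (V p q), forall p q, V p q (bgadd x m p q) &
  forall y, Tot n y -> (forall p q, (p + q)%N = n -> V p q (y p q)) -> cyc A n y -> S y]].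
exists O; split; [split; [|split] | apply/seteqP; split].
- by rewrite SE; move=> x [].
- move=> x m0 [Tx [m Nm xm]] Nm0; split; first exact: Tot_add Tx (NT _ Nm0).
  exists (bgsub m m0); first exact: NB.
  suff -> : bgadd (bgadd x m0) (bgsub m m0) = bgadd x m by [].
  by apply: bgext => p q; rewrite !bgaddE bgsubE addrACA subrr addr0.
- rewrite oE; split=> [x [] //|x].
  case=> Tx [m Nm [V [oV xV SV]]].
  exists (fun p q => [set y | V p q (y + m p q)]); split=> [p q _|y Ty yV].
    by split; [exact: open_translate | exact: xV].
  split=> //; exists m => //; exists V; split => // p q.
  have [/yV //|/eqP pqn] := eqVneq (p + q)%N n.
  by have := xV p q; rewrite !bgaddE Tx // Ty.
- move=> s Ss; split; last exact: SC.
  have [Ts _] := SC _ Ss; rewrite SE in Ts.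
  by split=> //; exists bg0 => //; rewrite bgaddx0; exact: loc.
- move=> x [[Tx [m Nm [V [_ xV SV]]]] Cx]; apply: (Ssat _ _ Nm); apply: SV.
  + exact: Tot_add Tx (NT _ Nm).
  + by move=> p q _; exact: xV.
  + exact: Csat.
Qed.

Lemma qopen_prev_nbhs (A : cplx K) {n} {V : set BG} {b} :
  (forall n, copen A n = Tot_open n) -> qopen_prev A n V -> V b ->
  exists2 Nc : forall p q, set (K p q), (forall p q, nbhs 0 (Nc p q)) &
    forall c, Tot_prev n c -> (forall p q, Nc p q (c p q)) -> V (bgadd b c).
Proof.
move=> oE; case: n => [|n] /= oV Vb.
  exists (fun p q => setT) => [p q|c c0 _]; first exact: filterT.
  suff -> : bgadd b c = b by [].
  by apply: bgext => p q; rewrite bgaddE c0 // addr0.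
have [_ [_]] := oV; rewrite oE => -[VT /(_ b Vb) [W [W0 WV]]].
exists (fun p q => if (p + q == n)%N then [set y | W p q (b p q + y)] else setT).
  move=> p q; case: eqP => [pqn|_]; last exact: filterT.
  by have [oW Wb] := W0 p q pqn; exact: nbhs0_translate.
move=> c c0 cW; apply: WV.
  by apply: Tot_add (VT _ Vb) _ => p q pqn; apply: c0 => -[].
by move=> p q pqn; have := cW p q; rewrite pqn eqxx.
Qed.

Lemma Tot_prev_Sprev n b : Sprev (cplxK d' d'') n b -> Tot_prev n b.
Proof. by case: n => [|n] /= bn p q pqn; [rewrite bn | apply: bn => pqE; apply: pqn; rewrite pqE]. Qed.

Lemma totd_add_boundary a b m : totd (bgadd (bgsub a (totd b)) m) = bgadd (totd a) (totd m).
Proof. by rewrite totdD totdB dd0; congr bgadd; apply: bgext => p q; rewrite bgsubE subr0. Qed.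

Lemma quasi_open_zero_quotient n :
  quasi_open_deg (fun _ => bg0) (cplx0 d' d'') (cplxKmodKI d' d'') n.
Proof.
move=> W [Wsub [_ Wloc]].
have Scyc : [set bgadd (bgsub bg0 (totd w.2)) m | w in W & m in KI n]
    `<=` cyc (cplxKmodKI d' d'') n.
  move=> _ [[a b] /= Wab [m Im <-]]; have [_ /Tot_prev_Sprev Tb] := Wsub _ Wab.
  split; first exact: Tot_add (Tot_add (fun _ _ _ => erefl) (Tot_opp (Tot_totd Tb))) (KI_Tot Im).
  by rewrite /= totd_add_boundary totd0; exact: KI_add (KI0 _) (KI_totd Im).
apply: cyc_open_of_local => //.
- by move=> ? /KI_Tot.
- exact: KI0.
- by move=> a b Ia Ib; exact: KI_add Ia (KI_opp Ib).
- move=> x m Im [Tx Cx]; split; first exact: Tot_add Tx (KI_Tot Im).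
  by rewrite /= totdD; exact: KI_add Cx (KI_totd Im).
- move=> x m Im [w Ww [m' Im' xmE]]; exists w => //.
  exists (bgsub m' m); first exact: KI_add Im' (KI_opp Im).
  exact: bgadd_subKr.
move=> _ [[a b] Wab [m0 Im0 <-]].
have [U [V [_ Ua qV Vb UVW]]] := Wloc a b Wab.
have [Nc Nc0 bcV] := qopen_prev_nbhs (cplxKmodKI d' d'') (fun _ => erefl) qV Vb.
set s := bgadd _ m0; have [Ts Cs] : cyc (cplxKmodKI d' d'') n s.
  by apply: Scyc; exists (a, b) => //; exists m0.
have [Vs [oVs sVs near]] := decomp_near Ts Cs.1 Nc0 (fun p q => filterT).
exists Vs; split => // y Ty yV [_ [dy _]].
have [c [m [Tc Ncc [Im _] ->]]] := near y Ty yV dy.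
exists (a, bgadd b c); first by apply: UVW; split => //; exact: bcV.
exists (bgadd m0 m); first exact: KI_add Im0 Im.
rewrite /s /= totdD; move: (totd b) (totd c) => u v.
apply: bgext => p q; rewrite !bgaddE !bgsubE bgaddE bg0E.
by rewrite !sub0r opprD [LHS]addrACA [- v p q + _]addrC.
Qed.

Lemma cyc_open_KI_nbhs {n U a} : cyc_open (cplxKI d' d'') n U -> U a ->
  exists2 Nm : forall p q, set (K p q), (forall p q, nbhs 0 (Nm p q)) &
    forall m, KI n m -> totd m = bg0 -> Nm n 0%N (m n 0%N) -> U (bgadd a m).
Proof.
move=> [OU [[_ [_ [Oa [oOa OUE]]]] UE]] Ua.
have [OUa [Ia da]] : (OU `&` cyc (cplxKI d' d'') n) a by rewrite -UE.
have [_ Oaa] : [set x | KI n x /\ Oa (x n 0%N)] a by rewrite -OUE.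
have [Nm Nm0 amO] := nbhs_family_single oOa Oaa.
exists Nm => // m Im dm Nmm; rewrite UE; split.
  by rewrite OUE; split; [exact: KI_add | exact: amO].
by split; [exact: KI_add | rewrite /= totdD (da : totd a = bg0) dm bgaddx0].
Qed.

Lemma quasi_open_KI_K n : quasi_open_deg id (cplxKI d' d'') (cplxK d' d'') n.
Proof.
move=> W [Wsub [_ Wloc]].
have Scyc : [set bgadd (bgsub w.1 (totd w.2)) m | w in W & m in [set bg0]]
    `<=` cyc (cplxK d' d'') n.
  move=> _ [[a b] /= Wab [_ -> <-]]; have [[Ia da] /Tot_prev_Sprev Tb] := Wsub _ Wab.
  split; first exact: Tot_add (Tot_add (KI_Tot Ia) (Tot_opp (Tot_totd Tb))) (fun _ _ _ => erefl).
  by rewrite /= totd_add_boundary (da : totd a = bg0) totd0 bgaddx0.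
apply: cyc_open_of_local => //.
- by move=> x ->.
- by move=> a b -> ->; apply: bgext => p q; rewrite bgsubE subrr.
- by move=> x m ->; rewrite bgaddx0.
- by move=> x m ->; rewrite bgaddx0.
move=> _ [[a b] Wab [_ -> <-]].
have [U [V [Ucyc Ua qV Vb UVW]]] := Wloc a b Wab.
have [Nm Nm0 amU] := cyc_open_KI_nbhs Ucyc Ua.
have [Nc Nc0 bcV] := qopen_prev_nbhs (cplxK d' d'') (fun _ => erefl) qV Vb.
set s := bgadd _ bg0; have [Ts ds] : cyc (cplxK d' d'') n s.
  by apply: Scyc; exists (a, b) => //; exists bg0.
have [Vs [oVs sVs near]] := decomp_near Ts (d_concentrated_cycle ds) Nc0 Nm0.
exists Vs; split => // y Ty yV [_ dy].
have [c [m [Tc Ncc [Im Nmm] yE]]] := near y Ty yV (d_concentrated_cycle dy).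
have dm : totd m = bg0.
  move: (congr1 totd yE); rewrite totdD totdB dd0 (dy : totd y = bg0) (ds : totd s = bg0).
  move: (totd m) => u uE; apply: bgext => p q; have := f_equal (fun f => f p q) uE.
  by rewrite !bgaddE bgsubE !bg0E add0r subr0 => ->.
exists (bgadd a m, bgadd b c); first by apply: UVW; split; [exact: amU | exact: bcV].
exists bg0 => //.
rewrite /= yE /s /= totdD; move: (totd b) (totd c) => u v.
apply: bgext => p q; rewrite !bgaddE !bgsubE !bgaddE bg0E.
by rewrite !addr0 opprD [LHS]addrACA.
Qed.

Lemma bnd_K n x :
  bnd (cplxK d' d'') n x <-> exists2 b, Sprev (cplxK d' d'') n b & x = totd b.
Proof.
case: n => [|n] /=; split.
- by move=> ->; exists bg0 => //; rewrite totd0.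
- by move=> [b -> ->]; rewrite totd0.
- by move=> [b Tb [m -> <-]]; exists b => //; rewrite bgaddx0.
- by move=> [b Tb ->]; exists b => //; exists bg0 => //; rewrite bgaddx0.
Qed.

Lemma Sprev_opp n b : Sprev (cplxK d' d'') n b -> Sprev (cplxK d' d'') n (bgopp b).
Proof.
case: n => [|n] /=; last exact: Tot_opp.
by move=> ->; apply: bgext => p q; rewrite bgoppE oppr0.
Qed.

Lemma src_open_hom_Sprev {n V} : hom_open (cplxKI d' d'') n V ->
  src_open (cplxKI d' d'') (cplxK d' d'') n (V `*` Sprev (cplxK d' d'') n).
Proof.
move=> [Vcyc [_ Vo]].
split; [|split].
- by move=> [a b] [Va Sb]; split => //; exact: Vcyc.
- move=> a b m m' [Va Sb] /= -> m'0.
  have -> : m' = bg0 by move: m'0; case: (n).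
  by rewrite !bgaddx0.
- move=> a b [Va Sb]; exists V, (Sprev (cplxK d' d'') n); split => //.
  case: (n) => [|n'] //=; split => //; split; first by move=> x m Tx ->; rewrite bgaddx0.
  split => // x Tx; exists (fun _ _ => setT); split => // p q _; split => //.
  exact: openT.
Qed.

Lemma hom_map_open_KI_K n : hom_map_open id (cplxKI d' d'') (cplxK d' d'') n.
Proof.
move=> V HV.
suff -> : [set bgadd (id x) b | x in V & b in bnd (cplxK d' d'') n] =
  [set bgadd (bgsub w.1 (totd w.2)) m | w in V `*` Sprev (cplxK d' d'') n & m in [set bg0]]
  by apply: quasi_open_KI_K n _ (src_open_hom_Sprev HV).
apply/seteqP; split.
  move=> _ [x Vx [_ /bnd_K [b Sb ->] <-]].
  exists (x, bgopp b); first by split => //; exact: Sprev_opp.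
  exists bg0 => //=; rewrite totdN; move: (totd b) => u.
  by apply: bgext => p q; rewrite !bgaddE bgsubE bgoppE opprK bg0E addr0.
move=> _ [[x b] [/= Vx Sb] [m -> <-]].
exists x => //; exists (totd (bgopp b)); first by apply/bnd_K; exists (bgopp b) => //; exact: Sprev_opp.
by rewrite totdN bgaddx0.
Qed.

End DoubleComplex.

Theorem proposition2p4
  (K : nat -> nat -> topologicalZmodType)
  (d' : forall p q, {additive K p q -> K p.+1 q})
  (d'' : forall p q, {additive K p q -> K p q.+1})
  (cont_d' : forall p q, continuous (d' p q))
  (cont_d'' : forall p q, continuous (d'' p q))
  (dd0 : forall x : BG K, totd d' d'' (totd d' d'' x) = bg0 K)
  (open_d'' : forall p q (U : set (K p q)), open U ->
      exists O : set (K p q.+1),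
        open O /\ d'' p q @` U = O `&` [set z | d'' p q.+1 z = 0]) :
  quasi_open (fun _ => bg0 K) (cplx0 d' d'') (cplxKmodKI d' d'') /\
  quasi_open id (cplxKI d' d'') (cplxK d' d'') /\
  (forall n, hom_map_open id (cplxKI d' d'') (cplxK d' d'') n).
Proof.
split; [|split] => n.
- exact: quasi_open_zero_quotient.
- exact: quasi_open_KI_K.
- exact: hom_map_open_KI_K.
Qed.
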